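(* For $k\geq2$, the $4$-valent $(2k,0)$-cluster $\square(2k)$ has eigenvalue $4$ as a $D_4$-invariant eigenvalue with multiplicity at least $\lceil (k-1)/2\rceil$; that is, the space of $D_4$-invariant functions $u$ on $V(\square(2k))$ with $\Delta_{\square(2k)}u=4u$ has dimension at least $\lceil (k-1)/2\rceil$.
   Context: The $4$-valent $(m,0)$-cluster $\square(m)$ is the graph whose vertices are the barycenters of the $m^2$ unit squares of the square lattice contained in the square with vertices $0,m,(1+i)m,im$, adjacent when the squares share an edge (the $m\times m$ grid graph), with Laplacian $(\Delta_{\square(m)}u)(x)=\deg(x)u(x)-\sum_{y\sim x}u(y)$. The dihedral group $D_4$ of symmetries of the square acts on $V(\square(m))$; $u$ is $D_4$-invariant if $u(\sigma x)=u(x)$ for all $\sigma\in D_4$ and all $x$. *)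

From HB Require Import structures.
From mathcomp Require Import all_boot all_order all_algebra.
Set Implicit Arguments. Unset Strict Implicit. Unset Printing Implicit Defensive.
Import Order.TTheory GRing.Theory Num.Theory.
Local Open Scope ring_scope.

(* Vertices of the m x m square cluster: the unit square [a,a+1] x [b,b+1]
   (0 <= a,b < m) is encoded by (a,b); its barycenter is (a+1/2, b+1/2). *)
Definition sqV (m : nat) : finType := ('I_m * 'I_m)%type.

Definition sq_adj (m : nat) : rel (sqV m) := fun x y =>
  ((x.1 == y.1) && ((x.2.+1 == y.2 :> nat) || (y.2.+1 == x.2 :> nat))) ||
  ((x.2 == y.2) && ((x.1.+1 == y.1 :> nat) || (y.1.+1 == x.1 :> nat))).

Definition sq_deg (m : nat) (x : sqV m) : nat := #|[set y | sq_adj x y]|.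

Definition sqFun (R : realFieldType) (m : nat) := {ffun sqV m -> R^o}.

Definition sq_lap (R : realFieldType) (m : nat) (u : sqFun R m) : sqFun R m :=
  [ffun x => (sq_deg x)%:R * u x - \sum_(y | sq_adj x y) u y].

(* The dihedral group D_4 of symmetries of the square [0,m]^2 acting on
   barycenters; x |-> m - x sends a+1/2 to (m-1-a)+1/2, i.e. rev_ord. *)
Definition D4act (m : nat) (g : 'I_8) (x : sqV m) : sqV m :=
  let: (a, b) := x in
  match val g with
  | 0 => (a, b)
  | 1 => (b, rev_ord a)
  | 2 => (rev_ord a, rev_ord b)
  | 3 => (rev_ord b, a)
  | 4 => (b, a)
  | 5 => (rev_ord b, rev_ord a)
  | 6 => (rev_ord a, b)
  | _ => (a, rev_ord b)
  end.

Definition D4_eigenspace (R : realFieldType) (m : nat) (lam : R)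
  : {vspace sqFun R m} :=
  (lker (linfun (fun u : sqFun R m => sq_lap u - lam *: u)) :&:
   \bigcap_(g : 'I_8)
     lker (linfun (fun u : sqFun R m => [ffun x => u (D4act g x)] - u)))%VS.

From HB Require Import structures.
From mathcomp Require Import all_boot all_order all_algebra zify ring lra.
Set Implicit Arguments. Unset Strict Implicit. Unset Printing Implicit Defensive.
Import Order.TTheory GRing.Theory Num.Theory.
Local Open Scope ring_scope.

(* Extend a function on the m x m grid beyond its border by reflection,
   u(-1,y) = u(0,y), u(m,y) = u(m-1,y), and likewise in y.  Then the equation
   Lap u = 4u says exactly that the four neighbours of every point sum to zero,
   and the substitution u(x,y) = (-1)^y w(x,y) turns it into the discrete wave
   equation, solved by w(x,y) = F(x+y) + F(y-x-1).  If F is m-periodic,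
   satisfies F(-2-t) = -F(t) and vanishes at odd arguments, then u obeys the
   reflection conditions and is invariant under the transposition and the
   reflection x |-> m-1-x, which generate D_4.  For m = 2k the choice
   F(t) = [2k | t - 2j] - [2k | t + 2 + 2j], j < k/2, gives functions whose values
   at the diagonal points (i,i), i < k/2, are +-1 for i = j and 0 otherwise, so
   they are linearly independent, and there are floor(k/2) = ceil((k-1)/2) of them. *)

Section GridSums.
Variables (V : nmodType) (n : nat).

Lemma sum_grid_point (p q : int) (G : int -> int -> V) :
  \sum_(y : sqV n) (if (y.1 == p :> int) && (y.2 == q :> int) then G y.1 y.2 else 0)
  = if (0 <= p < n%:Z) && (0 <= q < n%:Z) then G p q else 0.
Proof.
case: ifP => [/andP[hp hq] | hpq].
  have [a ha ->] : exists2 a, (a < n)%N & p = a%:Z by exists `|p|%N; lia.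
  have [b hb ->] : exists2 b, (b < n)%N & q = b%:Z by exists `|q|%N; lia.
  rewrite (bigD1 ((Ordinal ha, Ordinal hb) : sqV n)) ?eqxx //= big1 ?addr0 //.
  move=> [i j] /= ne; case: ifP => // /andP[/eqP ei /eqP ej]; case/negP: ne.
  by rewrite xpair_eqE -!val_eqE /=; apply/andP; split; apply/eqP; lia.
apply: big1 => -[[i hi] [j hj]] /=; case: ifP => // /andP[/eqP ei /eqP ej].
by move: hpq; rewrite -ei -ej; lia.
Qed.

Lemma sum_adj (x : sqV n) (G : int -> int -> V) :
  \sum_(y | sq_adj x y) G y.1 y.2 =
    (if (x.1.+1 < n)%N then G (x.1%:Z + 1) x.2 else 0)
  + (if (0 < x.1)%N then G (x.1%:Z - 1) x.2 else 0)
  + (if (x.2.+1 < n)%N then G x.1 (x.2%:Z + 1) else 0)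
  + (if (0 < x.2)%N then G x.1 (x.2%:Z - 1) else 0).
Proof.
pose at_pt (p q : int) (y : sqV n) :=
  if (y.1 == p :> int) && (y.2 == q :> int) then G y.1 y.2 else 0.
have split_adj y : (if sq_adj x y then G y.1 y.2 else 0) =
    at_pt (x.1%:Z + 1) x.2 y + at_pt (x.1%:Z - 1) x.2 y
  + at_pt x.1 (x.2%:Z + 1) y + at_pt x.1 (x.2%:Z - 1) y.
  case: x y => [[a ha] [b hb]] [[c hc] [d hd]]; rewrite /at_pt /sq_adj /= -!val_eqE /=.
  by repeat case: ifP => ?; rewrite ?addr0 ?add0r //; lia.
rewrite big_mkcond (eq_bigr _ (fun y _ => split_adj y)) !big_split /= !sum_grid_point.
case: x {split_adj} => [[a ha] [b hb]] /=.
by congr (_ + _ + _ + _); congr (if _ then _ else _); lia.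
Qed.
End GridSums.

Section Laplacian.
Variables (R : realFieldType) (n : nat).

Lemma sq_lapE (u : sqFun R n) x : sq_lap u x = \sum_(y | sq_adj x y) (u x - u y).
Proof.
by rewrite ffunE sumrB sumr_const mulr_natl /sq_deg cardsE.
Qed.

Lemma sq_lap_reflected (G : int -> int -> R) :
    (forall y, G (-1) y = G 0 y) -> (forall y, G n%:Z y = G (n%:Z - 1) y) ->
    (forall x, G x (-1) = G x 0) -> (forall x, G x n%:Z = G x (n%:Z - 1)) ->
  forall x : sqV n, sq_lap [ffun y : sqV n => G y.1 y.2] x =
    4%:R * G x.1 x.2 - (G (x.1%:Z + 1) x.2 + G (x.1%:Z - 1) x.2
                        + G x.1 (x.2%:Z + 1) + G x.1 (x.2%:Z - 1)).
Proof.
move=> G_left G_right G_bottom G_top [[a ha] [b hb]].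
rewrite sq_lapE; under eq_bigr do rewrite !ffunE.
rewrite (sum_adj _ (fun p q => G a b - G p q)) /=.
have inner (c : bool) (p q : int) : (~~ c -> G p q = G a b) ->
    (if c then G a b - G p q else 0) = G a b - G p q.
  by case: c => // /(_ isT) ->; rewrite subrr.
rewrite !inner; first lra.
- move=> b0; have -> : b = 0%N by lia.
  by rewrite sub0r G_bottom.
- move=> bn; have eb : b%:Z = n%:Z - 1 by lia.
  by rewrite eb subrK G_top.
- move=> a0; have -> : a = 0%N by lia.
  by rewrite sub0r G_left.
- move=> an; have ea : a%:Z = n%:Z - 1 by lia.
  by rewrite ea subrK G_right.
Qed.
End Laplacian.

Section EigenspaceMembership.
Variables (R : realFieldType) (n : nat).

Lemma sq_lap_is_linear : linear (@sq_lap R n).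
Proof.
move=> a u v; apply/ffunP => x; rewrite !ffunE.
under eq_bigr do rewrite !ffunE.
by rewrite big_split /= -scaler_sumr /GRing.scale /=; ring.
Qed.

Definition sq_lap_shift (lam : R) (u : sqFun R n) := sq_lap u - lam *: u.

Lemma sq_lap_shift_is_linear lam : linear (sq_lap_shift lam).
Proof.
move=> a u v; rewrite /sq_lap_shift sq_lap_is_linear.
by rewrite scalerDr scalerBr scalerA mulrC -scalerA addrACA opprD.
Qed.
HB.instance Definition _ lam := GRing.isLinear.Build R (sqFun R n) (sqFun R n) _
  (sq_lap_shift lam) (sq_lap_shift_is_linear lam).

Definition D4_defect (g : 'I_8) (u : sqFun R n) := [ffun x => u (D4act g x)] - u.

Lemma D4_defect_is_linear g : linear (D4_defect g).
Proof.
by move=> a u v; apply/ffunP => x; rewrite /D4_defect !ffunE /GRing.scale /=; ring.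
Qed.
HB.instance Definition _ g := GRing.isLinear.Build R (sqFun R n) (sqFun R n) _
  (D4_defect g) (D4_defect_is_linear g).

Lemma mem_D4_eigenspace (lam : R) (u : sqFun R n) :
  sq_lap u = lam *: u -> (forall g x, u (D4act g x) = u x) ->
  u \in D4_eigenspace n lam.
Proof.
move=> u_eigen u_inv; rewrite memv_cap; apply/andP; split.
  rewrite memv_ker (lfunE (sq_lap_shift lam)) /= /sq_lap_shift u_eigen.
  by rewrite subrr.
rewrite memvE; apply/subv_bigcapP => g _.
rewrite -memvE memv_ker (lfunE (D4_defect g)) /= /D4_defect.
by apply/eqP/ffunP => x; rewrite !ffunE u_inv subrr.
Qed.
End EigenspaceMembership.

Lemma D4act_invariant (m : nat) (T : Type) (u : sqV m -> T) :
    (forall a b, u (b, a) = u (a, b)) -> (forall a b, u (rev_ord a, b) = u (a, b)) ->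
  forall g x, u (D4act g x) = u x.
Proof.
move=> uC uR; have uRy a b : u (a, rev_ord b) = u (a, b) by rewrite uC uR uC.
move=> [[|[|[|[|[|[|[|[|g]]]]]]]] hg] [a b] /=.
all: by rewrite ?uR ?uRy // uC ?uR ?uRy.
Qed.

Lemma free_eval_diag (T : finType) (K : fieldType) (m : nat)
    (f : 'I_m -> {ffun T -> K^o}) (p : 'I_m -> T) :
    (forall i, f i (p i) != 0) -> (forall i j, i != j -> f i (p j) = 0) ->
  free [tuple f i | i < m].
Proof.
move=> f_diag f_off; apply/freeP => a sum0 i.
move: (congr1 (fun g : {ffun T -> K^o} => g (p i)) sum0) => /=.
rewrite sum_ffunE ffunE (bigD1 i) // big1 => [|j ji].
  rewrite ffunE nth_mktuple /= addr0 => /eqP; rewrite mulf_eq0 (negbTE (f_diag i)) orbF.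
  by move/eqP.
by rewrite ffunE (nth_map j) ?size_enum_ord // nth_ord_enum f_off ?scaler0 // eq_sym.
Qed.

Lemma dvdz_small (d m : int) : (`|m| < `|d|)%N -> (d %| m)%Z = (m == 0).
Proof.
rewrite dvdzE; have [->|m0] := eqVneq m 0; first by rewrite dvdn0.
by move=> lt; apply/negbTE/negP => /dvdn_leq; lia.
Qed.

Definition evenz (t : int) : bool := (2 %| t)%Z.

Lemma evenzD s t : evenz (s + t) = (evenz s == evenz t).
Proof. by rewrite /evenz; do 3 case: dvdz_mod0P => ?; lia. Qed.

Lemma evenzN t : evenz (- t) = evenz t.
Proof. by rewrite /evenz rpredN. Qed.

Section WaveSolution.
Variables (R : comNzRingType) (K : int) (F : int -> R).
Hypotheses (F_periodic : forall t, F (t + K) = F t)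
           (F_antisym : forall t, F (-2 - t) = - F t)
           (F_odd : forall t, ~~ evenz t -> F t = 0).

Definition alt (t : int) : R := if evenz t then 1 else -1.

Lemma altS t : alt (t + 1) = - alt t.
Proof. by rewrite /alt evenzD; case: (evenz t); rewrite ?opprK. Qed.

Lemma altSN t : alt (t - 1) = - alt t.
Proof. by rewrite -[in RHS](subrK 1 t) altS opprK. Qed.

Lemma alt_neq0 t : alt t != 0.
Proof. by rewrite /alt; case: ifP; rewrite ?oppr_eq0 oner_eq0. Qed.

Definition wave (x y : int) : R := alt y * (F (x + y) + F (y - x - 1)).

Lemma F_periodicN t : F (t - K) = F t.
Proof. by rewrite -[in RHS](subrK K t) F_periodic. Qed.

Lemma wave_harmonic x y :
  wave (x + 1) y + wave (x - 1) y + wave x (y + 1) + wave x (y - 1) = 0.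
Proof.
pose s := x + y; pose d := y - x - 1.
have -> : wave (x + 1) y = alt y * (F (s + 1) + F (d - 1)).
  by rewrite /wave; congr (_ * (F _ + F _)); rewrite /s /d; lia.
have -> : wave (x - 1) y = alt y * (F (s - 1) + F (d + 1)).
  by rewrite /wave; congr (_ * (F _ + F _)); rewrite /s /d; lia.
have -> : wave x (y + 1) = - alt y * (F (s + 1) + F (d + 1)).
  by rewrite /wave altS; congr (_ * (F _ + F _)); rewrite /s /d; lia.
have -> : wave x (y - 1) = - alt y * (F (s - 1) + F (d - 1)).
  by rewrite /wave altSN; congr (_ * (F _ + F _)); rewrite /s /d; lia.
ring.
Qed.

Lemma wave_reflect_left y : wave (-1) y = wave 0 y.
Proof. by rewrite /wave addrC; congr (_ * (F _ + F _)); lia. Qed.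

Lemma wave_flip x y : wave (K - 1 - x) y = wave x y.
Proof.
rewrite /wave [F (x + y) + _]addrC -[F (x + y)]F_periodicN -[F (y - x - 1)]F_periodic.
by congr (_ * (F _ + F _)); lia.
Qed.

Lemma wave_reflect_right y : wave K y = wave (K - 1) y.
Proof.
have -> : wave K y = wave (K - 1 - -1) y by rewrite opprK subrK.
by rewrite wave_flip wave_reflect_left -(wave_flip 0) subr0.
Qed.

Lemma waveC x y : wave y x = wave x y.
Proof.
have odd_diff : evenz (y - x - 1) = ~~ evenz (x + y).
  by rewrite /evenz; do 2 case: dvdz_mod0P => ?; lia.
rewrite /wave (addrC y x) (_ : x - y - 1 = -2 - (y - x - 1)) ?F_antisym; last by lia.
have [even_s | odd_s] := boolP (evenz (x + y)).
  rewrite (@F_odd (y - x - 1)) ?odd_diff ?even_s // !subr0 !addr0.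
  by move: even_s; rewrite /alt evenzD; case: (evenz x); case: (evenz y).
rewrite (@F_odd (x + y)) // !add0r.
by move: odd_s; rewrite /alt evenzD; case: (evenz x); case: (evenz y) => //= _; ring.
Qed.
End WaveSolution.

Section Dipole.
Variable R : ringType.

Definition dipole (K c t : int) : R := (K %| t - c)%Z%:R - (K %| t + 2 + c)%Z%:R.

Lemma dipole_periodic K c t : dipole K c (t + K) = dipole K c t.
Proof.
rewrite /dipole.
have -> : t + K - c = t - c + K by lia.
have -> : t + K + 2 + c = t + 2 + c + K by lia.
by rewrite !(rpredDr _ (dvdzz K)).
Qed.

Lemma dipole_antisym K c t : dipole K c (-2 - t) = - dipole K c t.
Proof.
rewrite /dipole.
have -> : -2 - t - c = - (t + 2 + c) by lia.
have -> : -2 - t + 2 + c = - (t - c) by lia.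
by rewrite !rpredN opprB.
Qed.

Lemma dipole_odd K c t : evenz K -> evenz c -> ~~ evenz t -> dipole K c t = 0.
Proof.
move=> even_K even_c odd_t; have K_ndvd s : ~~ evenz s -> (K %| s)%Z = false.
  by apply: contraNF => /(dvdz_trans even_K).
by rewrite /dipole !K_ndvd ?subrr // !evenzD ?evenzN even_c /=; case: (evenz t) odd_t.
Qed.
End Dipole.

Lemma evenz_double (j : nat) : evenz (2 * j)%N.
Proof. by rewrite /evenz dvdzE /= dvdn_mulr. Qed.

Section GridWaves.
Variables (R : realFieldType) (k : nat).

Definition grid_wave (j : nat) : sqFun R (2 * k) :=
  [ffun x : sqV (2 * k) => wave (dipole R (2 * k)%N (2 * j)%N) x.1 x.2].

Lemma grid_wave_eigen j : sq_lap (grid_wave j) = 4%:R *: grid_wave j.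
Proof.
have F_odd := dipole_odd R (evenz_double k) (evenz_double j).
have wC := waveC (@dipole_antisym R _ _) F_odd.
have w_right := wave_reflect_right (@dipole_periodic R _ (2 * j)%N).
apply/ffunP => x; rewrite sq_lap_reflected.
- by rewrite wave_harmonic subr0 !ffunE.
- exact: wave_reflect_left.
- exact: w_right.
- by move=> y; rewrite wC wave_reflect_left wC.
- by move=> y; rewrite wC w_right wC.
Qed.

Lemma grid_wave_D4 j g x : grid_wave j (D4act g x) = grid_wave j x.
Proof.
have F_odd := dipole_odd R (evenz_double k) (evenz_double j).
move: g x; apply: D4act_invariant => a b; rewrite !ffunE.
  exact: waveC (@dipole_antisym R _ _) F_odd _ _.
have -> : (rev_ord a)%:Z = (2 * k)%N%:Z - 1 - a%:Z by case: a => a ha /=; lia.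
exact: wave_flip (@dipole_periodic R _ _) _ _.
Qed.

Lemma grid_wave_diag (i : nat) (a : 'I_(2 * k)) : (i < k./2)%N -> (a < k./2)%N ->
  grid_wave i (a, a) = (i == a :> nat)%:R * alt R a.
Proof.
move=> hi ha; rewrite ffunE /= /wave mulrC.
rewrite [dipole _ _ _ (_ - _ - 1)]dipole_odd ?evenz_double ?subrr //.
rewrite addr0 /dipole !dvdz_small; try lia.
have -> : (a%:Z + a - (2 * i)%N%:Z == 0) = (i == a :> nat) by apply/eqP/eqP; lia.
have -> : (a%:Z + a + 2 + (2 * i)%N%:Z == 0) = false by apply/eqP; lia.
by rewrite subr0.
Qed.
End GridWaves.

Theorem lemma5p2 (R : realFieldType) (k : nat) (hk : (2 <= k)%N) :
  (uphalf (k - 1) <= \dim (D4_eigenspace (2 * k) (4%:R : R)))%N.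
Proof.
have -> : uphalf (k - 1) = k./2 by rewrite uphalfE subn1 prednK // ltnW.
have half_le : (k./2 <= 2 * k)%N by lia.
pose diag_pt (j : 'I_k./2) : sqV (2 * k) := (widen_ord half_le j, widen_ord half_le j).
have free_waves : free [tuple grid_wave R k i | i < k./2].
  apply: (free_eval_diag (p := diag_pt)) => [i | i j ij]; rewrite grid_wave_diag //=.
    by rewrite eqxx mul1r alt_neq0.
  by rewrite val_eqE (negbTE ij) mul0r.
have waves_sub : (<<[tuple grid_wave R k i | i < k./2]>>
                   <= D4_eigenspace (2 * k) (4%:R : R))%VS.
  apply/span_subvP => _ /mapP [i _ ->]; apply: mem_D4_eigenspace.
    exact: grid_wave_eigen.
  exact: grid_wave_D4.
by move/eqP: free_waves; rewrite size_tuple => <-; exact: dimvS.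
Qed.
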